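(* Let $T$ be a tree on $n$ vertices. Then $k(T)=2$ if and only if $T$ is a star or a balanced double star.
   Context: For a connected graph $G=(V,E)$ and $v\in V$, the status of $v$ is $s(v)=\sum_{u\in V} d(v,u)$, where $d$ is the shortest-path distance; $k(G)$ is the number of distinct status values of vertices of $G$. A star is a tree of diameter $2$, i.e. $K_{1,m}$ with $m\ge 2$. A balanced double star is a graph obtained from $K_2$ by appending $a\ge 1$ pendent vertices to each of its two vertices (the same $a$ for both). *)

From mathcomp Require Import all_boot.
From mathcomp Require Import fingraph.
Set Implicit Arguments. Unset Strict Implicit. Unset Printing Implicit Defensive.

Definition simple_graph (T : finType) (e : rel T) : Prop :=
  irreflexive e /\ symmetric e.

Definition connected_graph (T : finType) (e : rel T) : Prop :=
  forall x y : T, connect e x y.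

Definition acyclic_graph (T : finType) (e : rel T) : Prop :=
  forall c : seq T, 2 < size c -> ~~ (cycle e c && uniq c).

Definition is_tree (T : finType) (e : rel T) : Prop :=
  [/\ simple_graph e, connected_graph e & acyclic_graph e].

Definition walkn (T : finType) (e : rel T) (n : nat) (x y : T) : bool :=
  [exists p : n.-tuple T, path e x p && (last x p == y)].

(* shortest-path distance: least n such that a walk of length n from x to y
   exists (for a connected graph this is < #|T|) *)
Definition dist (T : finType) (e : rel T) (x y : T) : nat :=
  find (fun n => walkn e n x y) (iota 0 #|T|).

Definition status (T : finType) (e : rel T) (v : T) : nat :=
  \sum_(u : T) dist e v u.

Definition k_status (T : finType) (e : rel T) : nat :=
  size (undup [seq status e v | v <- enum T]).

Definition is_star (T : finType) (e : rel T) : Prop :=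
  2 < #|T| /\
  exists c : T, forall x y : T, e x y = ((x == c) && (y != c)) || ((y == c) && (x != c)).

(* K_2 = ab with a >= 1 pendant vertices attached to each of a and b *)
Definition is_balanced_double_star (T : finType) (e : rel T) : Prop :=
  exists (a b : T) (A B : {set T}),
    [/\ a != b, a \notin A :|: B, b \notin A :|: B & [disjoint A & B]] /\
    [/\ A :|: B :|: [set a; b] = setT, #|A| = #|B| & 0 < #|A|] /\
    forall x y : T,
      e x y = ((x == a) && (y == b)) || ((x == b) && (y == a))
            || ((x == a) && (y \in A)) || ((y == a) && (x \in A))
            || ((x == b) && (y \in B)) || ((y == b) && (x \in B)).

(** In a tree, adjacent vertices u, v satisfy |d(u,w) - d(v,w)| = 1 for every w,
    and a vertex u with two distinct neighbours x, v is strictly closer to w than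
    at least one of them (otherwise a walk from x to v avoiding u would close a
    cycle).  Summing over w, the status is strictly convex along paths:
    2 s(u) + 2 <= s(x) + s(v).  Hence if only two status values occur, every
    internal vertex has the smaller one, and no vertex has two internal
    neighbours; the tree is then a star or a double star.  For a double star with
    hubs a, b and leaf sets A, B one has s(b) - s(a) = |A| - |B|, so the hubs
    share the smaller status exactly when |A| = |B|.  Conversely a leaf x hanging
    at a has s(x) = s(a) + n - 2, so stars (n > 2) and balanced double stars have
    exactly two status values. *)

From mathcomp Require Import all_boot.
From mathcomp Require Import fingraph zify.
Set Implicit Arguments. Unset Strict Implicit. Unset Printing Implicit Defensive.

Section Distance.
Variables (T : finType) (e : rel T).
Local Notation d := (dist e).

Lemma walknP n x y :
  reflect (exists p, [/\ size p = n, path e x p & last x p = y]) (walkn e n x y).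
Proof.
apply: (iffP existsP) => [[p /andP[p_path /eqP p_last]]|[p [p_size p_path p_last]]].
  by exists (val p); rewrite size_tuple.
have p_sz : size p == n by rewrite p_size.
by exists (Tuple p_sz); rewrite /= p_path p_last eqxx.
Qed.

Lemma dist_le x p : path e x p -> d x (last x p) <= size p.
Proof.
move=> p_path; rewrite /dist; have [small_p|] := ltnP (size p) #|T|; last first.
  by apply: leq_trans; rewrite -[X in _ <= X](size_iota 0 #|T|) find_size.
rewrite leqNgt; apply/negP => /(before_find 0); rewrite nth_iota // add0n.
by move/negbT/negP; apply; apply/walknP; exists p.
Qed.

Lemma dist_refl x : d x x = 0.
Proof. by apply/eqP; rewrite -leqn0 (dist_le (p := [::])). Qed.

Lemma rev_walk x p : symmetric e -> path e x p ->
  exists2 q, path e (last x p) q & last (last x p) q = x /\ {subset q <= x :: p}.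
Proof.
move=> e_sym p_path; exists (rev (belast x p)).
  by rewrite rev_path (eq_path (e' := e)) // => y z; apply: e_sym.
split; last by move=> z; rewrite mem_rev => /mem_belast.
by case: p {p_path} => //= y p; rewrite rev_cons last_rcons.
Qed.

Hypothesis e_conn : connected_graph e.

Lemma geodesic x y : exists p, [/\ path e x p, last x p = y & size p = d x y].
Proof.
have [p0 p0_path p0_last] := connectP (e_conn x y).
case: (shortenP p0_path) p0_last => p p_path p_uniq _ p_last.
have p_small : size p < #|T|.
  by have := max_card (mem (x :: p)); rewrite (card_uniqP p_uniq).
have has_walk : has (fun n => walkn e n x y) (iota 0 #|T|).
  by apply/hasP; exists (size p); [rewrite mem_iota | apply/walknP; exists p].
have := nth_find 0 has_walk; rewrite has_find size_iota in has_walk.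
by rewrite nth_iota // add0n => /walknP [q [q_size q_path q_last]]; exists q.
Qed.

Lemma dist_eq0 x y : (d x y == 0) = (x == y).
Proof.
have [<-|x_neq_y] := eqVneq x y; first by rewrite dist_refl.
by have [[|z p] [_ /= p_last <-]] := geodesic x y; rewrite // p_last eqxx in x_neq_y.
Qed.

Lemma dist_succ_le x y w : e x y -> d x w <= (d y w).+1.
Proof.
move=> e_xy; have [p [p_path <- <-]] := geodesic y w.
by apply: (dist_le (p := y :: p)); rewrite /= e_xy.
Qed.

Lemma dist_step x w : x != w -> exists2 y, e x y & d x w = (d y w).+1.
Proof.
move=> x_neq_w; have [[|y p] [p_path p_last p_size]] := geodesic x w.
  by rewrite -p_last eqxx in x_neq_w.
move: p_path => /= /andP[e_xy p_path].
exists y => //; apply/eqP; rewrite eqn_leq dist_succ_le // -p_size ltnS -p_last.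
exact: dist_le.
Qed.

Lemma descending_walk x w :
  exists p, [/\ path e x p, last x p = w & all (fun z => d z w < d x w) p].
Proof.
move dxw: (d x w) => n; elim: n x dxw => [|n IHn] x dxw.
  by exists [::]; move/eqP: dxw; rewrite dist_eq0 => /eqP.
have [|y e_xy] := @dist_step x w; first by rewrite -dist_eq0 dxw.
rewrite dxw => -[dyw]; have [p [p_path p_last p_below]] := IHn y (esym dyw).
exists (y :: p); rewrite /= e_xy -dyw ltnSn; split=> //.
by apply: sub_all p_below => z /ltnW.
Qed.

Hypothesis e_irr : irreflexive e.

Lemma dist_eq1 x y : (d x y == 1) = e x y.
Proof.
apply/idP/idP => [/eqP dxy1|e_xy].
  have [|z e_xz] := @dist_step x y; first by rewrite -(dist_eq0 x y) dxy1.
  by rewrite dxy1 => -[/esym/eqP]; rewrite dist_eq0 => /eqP <-.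
have := dist_succ_le y e_xy; rewrite dist_refl eqn_leq => -> /=.
by rewrite lt0n dist_eq0; apply: contraTneq e_xy => ->; rewrite e_irr.
Qed.

Lemma dist_le1 x y : (d x y <= 1) = (x == y) || e x y.
Proof. by rewrite leq_eqVlt ltnS leqn0 dist_eq1 dist_eq0 orbC. Qed.

End Distance.

Lemma sum_mem_card (T : finType) (A : {set T}) : \sum_(w : T) (w \in A : nat) = #|A|.
Proof. by rewrite -sum1_card [RHS]big_mkcond; apply: eq_bigr => w _; case: (w \in A). Qed.

Lemma size_undup_map_eq2 (T : finType) (R : eqType) (f : T -> R) :
  size (undup [seq f v | v <- enum T]) = 2 <->
  exists x y, f x != f y /\ forall v, f v = f x \/ f v = f y.
Proof.
have mem_image z : (z \in undup [seq f v | v <- enum T]) = [exists v, f v == z].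
  rewrite mem_undup; apply/mapP/existsP => [[v _ ->]|[v /eqP <-]]; first by exists v.
  by exists v; rewrite ?mem_enum.
split=> [|[x [y [fx_neq_fy f2]]]].
  case E: (undup _) => [|p [|q []]] // _.
  have := mem_image p; rewrite E mem_head => /esym/existsP[x /eqP fx].
  have := mem_image q; rewrite E !inE eqxx orbT => /esym/existsP[y /eqP fy].
  have := undup_uniq [seq f v | v <- enum T]; rewrite E /= inE andbT => p_neq_q.
  exists x, y; rewrite fx fy; split=> // v.
  have : f v \in undup [seq f v | v <- enum T] by rewrite mem_image; apply/existsP; exists v.
  by rewrite E !inE => /orP[]/eqP; [left|right].
rewrite -[2]/(size [:: f x; f y]); apply/perm_size/uniq_perm.
- exact: undup_uniq.
- by rewrite /= inE fx_neq_fy.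
move=> z; rewrite mem_image !inE; apply/existsP/idP => [[v /eqP <-]|/orP[]/eqP ->].
- by case: (f2 v) => ->; rewrite eqxx ?orbT.
- by exists x.
- by exists y.
Qed.

Section Tree.
Variables (T : finType) (e : rel T).
Hypotheses (e_irr : irreflexive e) (e_sym : symmetric e)
  (e_conn : connected_graph e) (e_acyc : acyclic_graph e).
Local Notation d := (dist e).
Local Notation s := (status e).

Lemma mem_walk_nbrs u x v p : e x u -> e v u -> x != v ->
  path e x p -> last x p = v -> u \in x :: p.
Proof.
move=> e_xu e_vu x_neq_v p_path p_last; apply: contraT => u_notin_p.
case: (shortenP p_path) p_last => q q_path q_uniq q_sub q_last.
have u_notin_q : u \notin x :: q.
  by apply: contra u_notin_p; rewrite !inE => /orP[-> //|/q_sub ->]; rewrite orbT.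
case: q q_path q_uniq q_last u_notin_q {q_sub} => [|y q] q_path q_uniq q_last u_notin_q.
  by rewrite -q_last eqxx in x_neq_v.
move: q_path q_last => /= /andP[e_xy q_path] q_last.
have /negP[] := e_acyc (c := [:: u, x, y & q]) erefl.
rewrite (cons_uniq u) u_notin_q q_uniq andbT /=.
by rewrite rcons_path e_sym e_xu e_xy q_path q_last e_vu.
Qed.

Lemma dist_fork x u v w : e x u -> e v u -> x != v ->
  d u w < maxn (d x w) (d v w).
Proof.
move=> e_xu e_vu x_neq_v; rewrite ltnNge geq_max; apply/negP => /andP[xw vw].
have [p [p_path p_last p_below]] := descending_walk e_conn x w.
have [q [q_path q_last q_below]] := descending_walk e_conn v w.
have [r r_path [r_last r_sub]] := rev_walk e_sym q_path.
have := mem_walk_nbrs (p := p ++ r) e_xu e_vu x_neq_v.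
rewrite cat_path p_path p_last -q_last r_path last_cat p_last -q_last r_last.
rewrite !inE mem_cat => /(_ isT erefl) /or3P[/eqP u_x|u_p|/r_sub].
- by rewrite u_x e_irr in e_xu.
- by have := allP p_below u u_p; rewrite ltnNge xw.
rewrite inE => /orP[/eqP u_v|u_q]; first by rewrite u_v e_irr in e_vu.
by have := allP q_below u u_q; rewrite ltnNge vw.
Qed.

Lemma dist_edge_neq u v w : e u v -> d u w != d v w.
Proof.
move=> e_uv; apply/eqP => duw_dvw; have [u_w|u_neq_w] := eqVneq u w.
  move: duw_dvw; rewrite u_w dist_refl => /esym/eqP; rewrite (dist_eq0 e_conn) => /eqP v_w.
  by rewrite u_w v_w e_irr in e_uv.
have [y e_uy duw] := dist_step e_conn u_neq_w.
have y_neq_v : y != v by apply/eqP => y_v; move: duw; rewrite duw_dvw y_v; lia.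
have e_yu : e y u by rewrite e_sym.
have e_vu : e v u by rewrite e_sym.
have := dist_fork w e_yu e_vu y_neq_v; lia.
Qed.

Lemma dist_edge u v w : e u v -> d v w = (d u w).+1 \/ d u w = (d v w).+1.
Proof.
move=> e_uv; have e_vu : e v u by rewrite e_sym.
have := dist_edge_neq w e_uv; have := dist_succ_le e_conn w e_uv.
have := dist_succ_le e_conn w e_vu; lia.
Qed.

Lemma status_convex x u v : e x u -> e u v -> x != v ->
  2 * s u + 2 <= s x + s v.
Proof.
move=> e_xu e_uv x_neq_v; have e_ux : e u x by rewrite e_sym.
have e_vu : e v u by rewrite e_sym.
have dist_mid w : d u w + d u w <= d x w + d v w.
  have := dist_fork w e_xu e_vu x_neq_v.
  have := dist_edge w e_ux; have := dist_edge w e_uv; lia.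
have := dist_edge u e_ux; have := dist_edge u e_uv; rewrite dist_refl => dvu dxu.
rewrite /status mul2n -addnn -!big_split /= (bigD1 u) //= [X in _ <= X](bigD1 u) //=.
by rewrite dist_refl addnC -addnA leq_add ?leq_sum //; lia.
Qed.

Definition closer a b := [set w | d a w < d b w].

Lemma status_edge a b : e a b -> s a + 2 * #|closer a b| = s b + #|T|.
Proof.
move=> e_ab; have dist_closer w : d a w + 2 * (w \in closer a b) = d b w + 1.
  by rewrite inE; have [] := dist_edge w e_ab => ->; rewrite ?ltnSn ?ltnNge ?leqnSn; lia.
rewrite -sum_mem_card big_distrr -big_split /= -sum1_card -big_split /=.
by apply: eq_bigr => w _; apply: dist_closer.
Qed.

Lemma mem_closer_nbr a b w : e a b -> e a w -> w != b -> w \in closer a b.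
Proof.
move=> e_ab e_aw w_neq_b; rewrite inE.
have /eqP := e_aw; rewrite -(dist_eq1 e_conn e_irr) => /eqP daw.
have := dist_edge w e_ab; have := w_neq_b; rewrite eq_sym -(dist_eq0 e_conn); lia.
Qed.

Definition pendant x a := forall y, e x y = (y == a).

Lemma status_pendant x a : pendant x a -> s x + 2 = s a + #|T|.
Proof.
move=> x_pendant; have e_xa : e x a by rewrite x_pendant.
have a_neq_x : a != x by apply: contraTneq e_xa => ->; rewrite e_irr.
suff closer_x : closer x a = [set x] by rewrite -(status_edge e_xa) closer_x cards1.
apply/setP => w; rewrite !inE; have [->|w_neq_x] := eqVneq w x.
  by rewrite dist_refl lt0n (dist_eq0 e_conn) a_neq_x.
rewrite eq_sym in w_neq_x; have [y] := dist_step e_conn w_neq_x.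
by rewrite x_pendant => /eqP -> ->; rewrite ltnNge leqnSn.
Qed.

Definition nbrs_except a b := [set w | e a w & w != b].

Lemma edge_nbrs_except a b w : e a b -> e a w = (w == b) || (w \in nbrs_except a b).
Proof. by move=> e_ab; rewrite inE; case: eqVneq => [->|]; rewrite ?e_ab ?andbT. Qed.

Lemma status_double_star a b (A B : {set T}) : e a b ->
  {subset A <= nbrs_except a b} -> {subset B <= nbrs_except b a} ->
  (forall w, [|| w == a, w == b, w \in A | w \in B]) ->
  s a + 2 * #|A| + 2 = s b + #|T|.
Proof.
move=> e_ab A_nbr B_nbr cover.
have a_notin_A : a \notin A by apply/negP => /A_nbr; rewrite inE e_irr.
suff closer_ab : closer a b = a |: A.
  by rewrite -(status_edge e_ab) closer_ab cardsU1 a_notin_A; lia.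
have e_ba : e b a by rewrite e_sym.
apply/eqP; rewrite eqEsubset; apply/andP; split; apply/subsetP => w; last first.
  case/setU1P => [->|/A_nbr]; last by rewrite inE => /andP[]; apply: mem_closer_nbr.
  by rewrite inE dist_refl lt0n (dist_eq0 e_conn); apply: contraTneq e_ab => ->; rewrite e_irr.
rewrite !inE => closer_w; case/or4P: (cover w) => [-> //|/eqP w_b|-> |/B_nbr].
- by move: closer_w; rewrite w_b dist_refl.
- by rewrite orbT.
rewrite inE => /andP[e_bw w_neq_a].
by have := mem_closer_nbr e_ba e_bw w_neq_a; rewrite inE ltnNge ltnW.
Qed.

Lemma status_hubs_eq a b (A B : {set T}) : e a b ->
  {subset A <= nbrs_except a b} -> {subset B <= nbrs_except b a} ->
  (forall w, [|| w == a, w == b, w \in A | w \in B]) ->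
  s a = s b <-> #|A| = #|B|.
Proof.
move=> e_ab A_nbr B_nbr cover; have e_ba : e b a by rewrite e_sym.
have cover_ba w : [|| w == b, w == a, w \in B | w \in A].
  by case/or4P: (cover w) => ->; rewrite ?orbT.
have := status_double_star e_ab A_nbr B_nbr cover.
have := status_double_star e_ba B_nbr A_nbr cover_ba; lia.
Qed.

Definition internal u := 1 < #|[set v | e u v]|.

Lemma internalP u : reflect (exists x v, [/\ e u x, e u v & x != v]) (internal u).
Proof.
apply: (iffP card_gt1P) => -[x [v]]; rewrite ?inE => -[ux uv x_neq_v].
  by exists x, v.
by exists x, v; rewrite !inE.
Qed.

Lemma pendant_of_leaf x a : ~~ internal x -> e x a -> pendant x a.
Proof.
rewrite /internal -leqNgt => /card_le1_eqP x_leaf e_xa y; apply/idP/eqP => [e_xy|-> //].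
by apply: (x_leaf a y); rewrite inE.
Qed.

Lemma internal_geodesic_step a w : 1 < d a w ->
  exists y, [/\ e a y, d a w = (d y w).+1 & internal y].
Proof.
move=> far; have a_neq_w : a != w by rewrite -(dist_eq0 e_conn); lia.
have [y e_ay day] := dist_step e_conn a_neq_w.
have y_neq_w : y != w by rewrite -(dist_eq0 e_conn); lia.
have [z e_yz dyw] := dist_step e_conn y_neq_w.
exists y; split=> //; apply/internalP; exists a, z; split=> //; first by rewrite e_sym.
by apply/eqP => a_z; move: day dyw; rewrite a_z; lia.
Qed.

Lemma exists_internal x y : s x != s y -> exists u, internal u.
Proof.
move=> sx_neq_sy; apply/existsP; move: sx_neq_sy; apply: contraNT => /existsPn leaves.
case: (ltnP 1 (d x y)) => [/internal_geodesic_step [z [_ _ z_int]]|].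
  by have := leaves z; rewrite z_int.
rewrite (dist_le1 e_conn e_irr) => /orP[/eqP -> //|e_xy]; have e_yx : e y x by rewrite e_sym.
have := status_pendant (pendant_of_leaf (leaves x) e_xy).
have := status_pendant (pendant_of_leaf (leaves y) e_yx); lia.
Qed.

Lemma star_of_internal a : internal a -> (forall b, e a b -> ~~ internal b) ->
  is_star e.
Proof.
move=> a_int nbr_leaf.
have e_a w : w != a -> e a w.
  move=> w_neq_a; case: (ltnP 1 (d a w)) => [/internal_geodesic_step [y [e_ay _]]|].
    by have := nbr_leaf y e_ay => /negP.
  by rewrite (dist_le1 e_conn e_irr) eq_sym (negbTE w_neq_a).
split.
  have := max_card (a |: [set v | e a v]); rewrite cardsU1 inE e_irr.
  by rewrite /internal in a_int; lia.
exists a => x y; have [-> |x_neq_a] := eqVneq x a.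
  by have [->|y_neq_a] := eqVneq y a; rewrite ?e_irr ?e_a.
have x_pendant : pendant x a.
  by apply: pendant_of_leaf; [apply: nbr_leaf; apply: e_a | rewrite e_sym e_a].
by rewrite x_pendant andbT.
Qed.

Section Hubs.
Variables a b : T.
Hypotheses (e_ab : e a b) (a_int_nbr : forall c, e a c -> internal c -> c = b)
  (b_int_nbr : forall c, e b c -> internal c -> c = a).

Lemma double_star_cover w :
  [|| w == a, w == b, w \in nbrs_except a b | w \in nbrs_except b a].
Proof.
have e_ba : e b a by rewrite e_sym.
case: (ltnP 1 (d a w)) => [|]; last first.
  rewrite (dist_le1 e_conn e_irr) (edge_nbrs_except _ e_ab) eq_sym.
  by case/or3P => ->; rewrite ?orbT.
move=> /internal_geodesic_step [y [e_ay day /(a_int_nbr e_ay) y_b]].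
case: (ltnP 1 (d b w)) => [|]; last first.
  rewrite (dist_le1 e_conn e_irr) (edge_nbrs_except _ e_ba) eq_sym.
  by case/or3P => ->; rewrite ?orbT.
move=> /internal_geodesic_step [z [e_bz dbw /(b_int_nbr e_bz) z_a]].
by move: day dbw; rewrite y_b z_a; lia.
Qed.

Lemma pendant_of_hub_nbr w : w \in nbrs_except a b -> pendant w a.
Proof.
rewrite inE => /andP[e_aw w_neq_b]; apply: pendant_of_leaf; last by rewrite e_sym.
by apply: contra w_neq_b => /(a_int_nbr e_aw) ->.
Qed.

End Hubs.

Lemma double_star_edgeE a b (A B : {set T}) : e a b ->
  (forall w, e a w = (w == b) || (w \in A)) -> (forall w, e b w = (w == a) || (w \in B)) ->
  {in A, forall w, pendant w a} -> {in B, forall w, pendant w b} ->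
  (forall w, [|| w == a, w == b, w \in A | w \in B]) ->
  forall x y, e x y =
    ((x == a) && (y == b)) || ((x == b) && (y == a))
    || ((x == a) && (y \in A)) || ((y == a) && (x \in A))
    || ((x == b) && (y \in B)) || ((y == b) && (x \in B)).
Proof.
move=> e_ab nbr_a nbr_b A_pendant B_pendant cover x y; apply/idP/idP => [e_xy|].
  case/or4P: (cover x) => [/eqP x_a|/eqP x_b|x_A|x_B].
  - by move: e_xy; rewrite x_a nbr_a eqxx => /orP[->|->]; rewrite ?orbT.
  - by move: e_xy; rewrite x_b nbr_b eqxx => /orP[->|->]; rewrite ?orbT.
  - by move: e_xy; rewrite A_pendant // => ->; rewrite x_A !orbT.
  - by move: e_xy; rewrite B_pendant // => ->; rewrite x_B !orbT.
have e_ba : e b a by rewrite e_sym.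
move=> /orP[/orP[/orP[/orP[/orP[|]|]|]|]|] /andP[/eqP-> ].
- by move/eqP->.
- by move/eqP->.
- by rewrite nbr_a => ->; rewrite orbT.
- by rewrite e_sym nbr_a => ->; rewrite orbT.
- by rewrite nbr_b => ->; rewrite orbT.
- by rewrite e_sym nbr_b => ->; rewrite orbT.
Qed.

Lemma double_star_of_hubs a b : e a b -> internal a ->
  (forall c, e a c -> internal c -> c = b) -> (forall c, e b c -> internal c -> c = a) ->
  #|nbrs_except a b| = #|nbrs_except b a| -> is_balanced_double_star e.
Proof.
move=> e_ab a_int a_int_nbr b_int_nbr card_AB; have e_ba : e b a by rewrite e_sym.
have a_neq_b : a != b by apply: contraTneq e_ab => ->; rewrite e_irr.
have cover := double_star_cover e_ab a_int_nbr b_int_nbr.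
exists a, b, (nbrs_except a b), (nbrs_except b a).
split; [split=> // | split; [split=> // |]].
- by rewrite !inE e_irr eqxx andbF.
- by rewrite !inE e_irr eqxx andbF.
- apply/pred0P => w /=; apply/negP => /andP[/(pendant_of_hub_nbr a_int_nbr) w_pendant].
  by rewrite inE e_sym w_pendant eq_sym (negbTE a_neq_b).
- apply/setP => w; rewrite in_setT !in_setU !in_set1.
  by case/or4P: (cover w) => ->; rewrite ?orbT.
- case/internalP: a_int => x [v [e_ax e_av x_neq_v]]; apply/card_gt0P.
  have [x_b|x_neq_b] := eqVneq x b; last by exists x; rewrite inE e_ax.
  by exists v; rewrite inE e_av -x_b eq_sym.
apply: double_star_edgeE => // w.
- exact: edge_nbrs_except.
- exact: edge_nbrs_except.
- exact: pendant_of_hub_nbr.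
- exact: pendant_of_hub_nbr.
Qed.

Section TwoStatuses.
Variables p q : nat.
Hypothesis status_pq : forall v, s v = p \/ s v = q.

Lemma internal_status_min u : internal u -> forall z, s u <= s z.
Proof.
case/internalP => x [v [e_ux e_uv x_neq_v]] z; have e_xu : e x u by rewrite e_sym.
have := status_convex e_xu e_uv x_neq_v.
have := status_pq u; have := status_pq x; have := status_pq v; have := status_pq z; lia.
Qed.

Lemma internal_nbr_unique c b x : e c b -> e c x -> internal b -> internal x -> b = x.
Proof.
move=> e_cb e_cx b_int x_int; apply/eqP; apply: contraT => b_neq_x.
have e_bc : e b c by rewrite e_sym.
have := status_convex e_bc e_cx b_neq_x.
have := internal_status_min b_int c; have := internal_status_min x_int c; lia.
Qed.

Lemma double_star_of_internal_edge a b : internal a -> internal b -> e a b ->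
  is_balanced_double_star e.
Proof.
move=> a_int b_int e_ab; have e_ba : e b a by rewrite e_sym.
have a_int_nbr c : e a c -> internal c -> c = b.
  by move=> e_ac c_int; apply: internal_nbr_unique e_ac e_ab c_int b_int.
have b_int_nbr c : e b c -> internal c -> c = a.
  by move=> e_bc c_int; apply: internal_nbr_unique e_bc e_ba c_int a_int.
apply: (double_star_of_hubs e_ab a_int a_int_nbr b_int_nbr).
apply/(status_hubs_eq e_ab) => //; first exact: double_star_cover.
by apply/eqP; rewrite eqn_leq (internal_status_min a_int) (internal_status_min b_int).
Qed.

End TwoStatuses.

Lemma k_status_hubs (H : {set T}) x0 : 2 < #|T| -> x0 \notin H ->
  {in H &, forall a b, s a = s b} ->
  (forall v, v \notin H -> exists2 a, a \in H & pendant v a) ->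
  k_status e = 2.
Proof.
move=> n_gt2 x0_notin_H hub_status hub_pendant.
have [a0 a0_H x0_pendant] := hub_pendant x0 x0_notin_H.
have s_x0 := status_pendant x0_pendant.
apply/size_undup_map_eq2; exists a0, x0; split; first by apply/eqP; lia.
move=> v; have [v_H|/hub_pendant [a a_H v_pendant]] := boolP (v \in H).
  by left; apply: hub_status.
have := status_pendant v_pendant; have := hub_status a a0 a_H a0_H; lia.
Qed.

Lemma k_status_star : is_star e -> k_status e = 2.
Proof.
case=> n_gt2 [c star_e].
have /card_gt0P [x0] : 0 < #|[set~ c]| by rewrite cardsC1; lia.
rewrite in_setC => x0_notin.
apply: (k_status_hubs n_gt2 x0_notin) => [a b /set1P-> /set1P-> //|v].
rewrite !inE => v_neq_c; exists c; rewrite ?inE // => y.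
by rewrite star_e (negbTE v_neq_c) andbT.
Qed.

Lemma k_status_double_star : is_balanced_double_star e -> k_status e = 2.
Proof.
case=> a [b [A [B [[a_neq_b a_notin b_notin disj_AB] [[cover_set card_AB A_gt0] edge]]]]].
move: a_notin b_notin; rewrite !in_setU !negb_or.
move=> /andP[/memPn a_notin_A /memPn a_notin_B] /andP[/memPn b_notin_A /memPn b_notin_B].
have e_ab : e a b by rewrite edge !eqxx.
have cover w : [|| w == a, w == b, w \in A | w \in B].
  have := in_setT w; rewrite -cover_set !in_setU !in_set1.
  by case/orP => /orP[] ->; rewrite ?orbT.
have A_pendant : {in A, forall w, pendant w a}.
  move=> w w_A y; rewrite edge (negbTE (a_notin_A w w_A)) (negbTE (b_notin_A w w_A)).
  by rewrite w_A (disjointFr disj_AB w_A) /= !andbF !orbF andbT.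
have B_pendant : {in B, forall w, pendant w b}.
  move=> w w_B y; rewrite edge (negbTE (a_notin_B w w_B)) (negbTE (b_notin_B w w_B)).
  by rewrite w_B (disjointFl disj_AB w_B) /= !andbF !orbF andbT.
have s_ab : s a = s b.
  apply/(status_hubs_eq e_ab) => // w w_in; rewrite inE.
    by rewrite e_sym A_pendant ?eqxx ?b_notin_A.
  by rewrite e_sym B_pendant ?eqxx ?a_notin_B.
have /card_gt0P [x0 x0_A] := A_gt0.
apply: (k_status_hubs (H := [set a; b]) (x0 := x0)).
- have := max_card (x0 |: [set a; b]); rewrite cardsU1 cards2 !inE.
  by rewrite (negbTE (a_notin_A x0 x0_A)) (negbTE (b_notin_A x0 x0_A)) a_neq_b.
- by rewrite !inE negb_or a_notin_A ?b_notin_A.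
- by move=> u v /set2P[]-> /set2P[]->.
move=> v; rewrite !inE negb_or => /andP[v_neq_a v_neq_b].
move: (cover v); rewrite (negbTE v_neq_a) (negbTE v_neq_b) /= => /orP[v_A|v_B].
  by exists a; [rewrite !inE eqxx | exact: A_pendant].
by exists b; [rewrite !inE eqxx orbT | exact: B_pendant].
Qed.

End Tree.

Theorem proposition3p5 (T : finType) (e : rel T) :
  is_tree e ->
  (k_status e = 2 <-> is_star e \/ is_balanced_double_star e).
Proof.
case=> -[e_irr e_sym] e_conn e_acyc; split; last first.
  case=> [/(k_status_star e_irr e_sym e_conn e_acyc) //|].
  exact: k_status_double_star e_irr e_sym e_conn e_acyc.
move=> /size_undup_map_eq2 [x [y [sx_neq_sy status_xy]]].
have [a a_int] := exists_internal e_irr e_sym e_conn e_acyc sx_neq_sy.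
case: (boolP [exists b, e a b && internal e b]) => [|/existsPn a_nbrs].
  case/existsP => b /andP[e_ab b_int]; right.
  exact: (double_star_of_internal_edge e_irr e_sym e_conn e_acyc status_xy a_int b_int e_ab).
left; apply: (star_of_internal e_irr e_sym e_conn a_int) => b e_ab.
by have := a_nbrs b; rewrite e_ab.
Qed.
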